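(* Let $n\ge1$ and let $f\colon S^1\to\mathbb{R}$ be a smooth function having at least $2n$ local extrema, all of whose critical points are non-degenerate. Then for almost every $v=(x,y,z)\in\mathbb{S}^2\subset\mathbb{R}^3$ with $y^2-4xz>0$, the function $$h_v(t)=x f(t)+y f'(t)+z f''(t)$$ has at least $n$ local maxima on $S^1$.
   Context: $\mathbb{S}^2=\{(x,y,z)\in\mathbb{R}^3: x^2+y^2+z^2=1\}$ with its standard area measure; ''almost every'' refers to this measure. *)

From HB Require Import structures.
From mathcomp Require Import all_boot all_order all_algebra.
From mathcomp Require Import all_classical all_reals all_analysis.
Set Implicit Arguments. Unset Strict Implicit. Unset Printing Implicit Defensive.
Import Order.TTheory GRing.Theory Num.Theory.
Import numFieldNormedType.Exports.
Local Open Scope classical_set_scope.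
Local Open Scope ring_scope.

(* Functions on S^1 are represented as 2*pi-periodic functions R -> R. *)
Definition periodic2pi {R : realType} (f : R -> R) : Prop :=
  forall t, f (t + 2 * pi) = f t.

Definition smooth {R : realType} (f : R -> R) : Prop :=
  forall (k : nat) (x : R), derivable (derive1n k f) x 1.

Definition is_local_max {R : realType} (h : R -> R) (t : R) : Prop :=
  exists2 e : R, 0 < e & forall s, `|s - t| < e -> h s <= h t.

Definition is_local_min {R : realType} (h : R -> R) (t : R) : Prop :=
  exists2 e : R, 0 < e & forall s, `|s - t| < e -> h t <= h s.

Definition is_local_extremum {R : realType} (h : R -> R) (t : R) : Prop :=
  is_local_max h t \/ is_local_min h t.

(* "h has at least m points with property P on S^1": m distinct points of
   the fundamental domain [0, 2 pi) satisfying P. *)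
Definition at_least_on_circle {R : realType} (m : nat) (P : R -> Prop) : Prop :=
  exists s : seq R, [/\ size s = m, uniq s &
    forall t, t \in s -> [/\ 0 <= t, t < 2 * pi & P t]].

Definition nondegenerate_crit {R : realType} (f : R -> R) : Prop :=
  forall t, derive1n 1 f t = 0 -> derive1n 2 f t != 0.

Definition hv {R : realType} (f : R -> R) (x y z : R) : R -> R :=
  fun t => x * f t + y * derive1n 1 f t + z * derive1n 2 f t.

Definition S2 {R : realType} : set (R * R * R) :=
  [set v | v.1.1 ^+ 2 + v.1.2 ^+ 2 + v.2 ^+ 2 = 1].

Definition sph {R : realType} (p : R * R) : R * R * R :=
  (sin p.2 * cos p.1, sin p.2 * sin p.1, cos p.2).

(* A subset A of S^2 is null for the standard area measure iff its preimage
   under spherical coordinates is Lebesgue-null in R^2 (area measure is the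
   pushforward of sin(ph) dth dph, and sph is a local diffeomorphism off the
   null set {sin ph = 0}). *)
Definition S2_negligible {R : realType} (A : set (R * R * R)) : Prop :=
  ((@lebesgue_measure R) \x (@lebesgue_measure R))%E.-negligible (sph @^-1` A).

(* If y^2 - 4xz > 0, the operator x + y D + z D^2 factors over the reals as
   z (D - a) (D - b), or is y (D - a) when z = 0.  Each factor D - a = e^{at} D e^{-at}
   preserves "changes sign at least 2n times around the circle": apply the mean value
   theorem to e^{-at} g between consecutive sign changes of a periodic g.  Near a
   non-degenerate extremum f' takes both signs, so 2n such extrema make f' change sign
   2n times; hence so does h_v' = (x + y D + z D^2) f', and each change of h_v' from
   positive to negative yields a local maximum of h_v.  The exceptional set is thus
   empty. *)

Set Warnings "-notation-overridden,-ambiguous-paths,-notation-incompatible-prefix".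
From mathcomp Require Import all_boot all_order all_algebra.
From mathcomp Require Import all_classical all_reals all_analysis.
From mathcomp Require Import lra ring zify.
Import Order.TTheory GRing.Theory Num.Theory.
Import numFieldNormedType.Exports.
Local Open Scope classical_set_scope.
Local Open Scope ring_scope.

Section SignChangesOnCircle.
Set Implicit Arguments. Unset Strict Implicit.
Context {R : realType}.
Implicit Types (g h : R -> R) (t d r : R).

Lemma derive_quotient_sign g t d : is_derive t 1 g d -> d != 0 ->
  exists2 e : R, 0 < e & forall s, 0 < `|s| < e -> 0 < (g (s + t) - g t) / s * d.
Proof.
move=> [dg gd] dn0.
have cvd : (fun s => s^-1 *: ((g \o shift t) (s *: 1) - g t)) @ 0^' --> d.
  by rewrite -gd; exact: dg.
have := @cvgr_dist_lt _ _ _ _ _ _ _ cvd `|d|; rewrite normr_gt0 dn0.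
move=> /(_ _ isT) /nbhs_ballP [e /= e0 He]; exists e => // s /andP [s0 se].
have := He s; rewrite /ball /= sub0r normrN -normr_gt0 s0 => /(_ se isT).
rewrite [s%:A]mulr1 -[s^-1 *: _]/(s^-1 * _) (mulrC s^-1).
set q := _ / s; rewrite ltr_norml => /andP [q1 q2].
case: (ltrgtP d 0) dn0 => // dpos _.
- by rewrite ltr0_norm // in q1 q2; rewrite -mulrNN; apply: mulr_gt0; lra.
- by rewrite gtr0_norm // in q1 q2; apply: mulr_gt0; lra.
Qed.

Lemma derive_step_sign g t d r (q : nat) : is_derive t 1 g d -> d != 0 -> 0 < r ->
  exists s, [/\ `|s| < r, 0 < (-1) ^+ q * s * d & 0 < (-1) ^+ q * (g (t + s) - g t)].
Proof.
move=> gd dn0 r0; have [e e0 He] := derive_quotient_sign gd dn0.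
have [M [M0 Me Mr]] : exists M : R, [/\ 0 < M, M < e & M < r].
  exists (Num.min e r / 2).
  have m0 : 0 < Num.min e r by rewrite lt_min e0 r0.
  have [me mr] : Num.min e r <= e /\ Num.min e r <= r by rewrite !ge_min !lexx ?orbT.
  split; lra.
have sq : (-1) ^+ q * (-1) ^+ q = 1 :> R by rewrite -expr2 sqrr_sign.
pose s := (-1) ^+ q * Num.sg d * M.
have sM : `|s| = M.
  by rewrite /s !normrM (gtr0_norm M0) normr_sign normr_sg dn0 !mul1r.
have sd : 0 < (-1) ^+ q * s * d.
  by rewrite /s !mulrA sq mul1r mulrAC -normrEsg mulr_gt0 // normr_gt0.
exists s; split => //; first by rewrite sM.
have quo : 0 < (g (t + s) - g t) / s * d by rewrite [t + s]addrC; apply: He; rewrite sM M0.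
have s0 : s != 0 by rewrite -normr_gt0 sM.
have := mulr_gt0 quo sd.
have -> : (g (t + s) - g t) / s * d * ((-1) ^+ q * s * d) =
  ((-1) ^+ q * (g (t + s) - g t)) * (d * d) by field.
by rewrite pmulr_lgt0 // lt0r mulf_neq0 //= -expr2 sqr_ge0.
Qed.

Lemma simple_zero_sign_near g t d r (q : nat) :
  is_derive t 1 g d -> d != 0 -> g t = 0 -> 0 < r ->
  exists u, `|u - t| < r /\ 0 < (-1) ^+ q * g u.
Proof.
move=> gd dn0 gt0 r0; have [s [sr _ gs]] := derive_step_sign q gd dn0 r0.
rewrite gt0 subr0 in gs; exists (t + s); split => //.
by rewrite addrC addKr.
Qed.

Lemma is_local_extremum_is_derive0 h t : (forall s, derivable h s 1) ->
  is_local_extremum h t -> is_derive t 1 h 0.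
Proof.
have ball_itv e s : s \in `](t - e), (t + e)[ -> `|s - t| < e.
  by rewrite in_itv /= ltr_norml => /andP [? ?]; apply/andP; split; lra.
have t_itv e : 0 < e -> t \in `](t - e), (t + e)[.
  by move=> e0; rewrite in_itv /=; apply/andP; split; lra.
move=> hd [[e e0 He]|[e e0 He]].
- apply: (@derive1_at_max _ h (t - e) (t + e)); first lra.
  + by move=> s _; exact: hd.
  + exact: t_itv.
  + by move=> s /ball_itv; exact: He.
- apply: (@derive1_at_min _ h (t - e) (t + e)); first lra.
  + by move=> s _; exact: hd.
  + exact: t_itv.
  + by move=> s /ball_itv; exact: He.
Qed.

Lemma is_local_max_between h dh u v : (forall t, is_derive t 1 h (dh t)) ->
  u < v -> 0 < dh u -> dh v < 0 -> exists2 c, u < c < v & is_local_max h c.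
Proof.
move=> hd uv du dv.
have cont : {within `[u, v], continuous h}.
  by apply: derivable_within_continuous => t _; have [] := hd t.
have [c cuv cmax] := EVT_max (ltW uv) cont.
move: cuv; rewrite in_itv /= => /andP [uc cv].
have vu : 0 < v - u by rewrite subr_gt0.
have [s [su sd hs]] := derive_step_sign 0 (hd u) (lt0r_neq0 du) vu.
have [s' [su' sd' hs']] := derive_step_sign 0 (hd v) (ltr0_neq0 dv) vu.
rewrite expr0 !mul1r in sd hs sd' hs'.
rewrite pmulr_lgt0 // in sd; rewrite nmulr_lgt0 // in sd'.
rewrite ltr_norml in su; rewrite ltr_norml in su'.
move: su su' => /andP [_ su] /andP [su' _].
have cu : u < c.
  rewrite lt_neqAle uc andbT; apply/eqP => cu.
  have : h (u + s) <= h c by apply: cmax; rewrite in_itv /=; apply/andP; split; lra.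
  by rewrite -cu; lra.
have cv' : c < v.
  rewrite lt_neqAle cv andbT; apply/eqP => cv'.
  have : h (v + s') <= h c by apply: cmax; rewrite in_itv /=; apply/andP; split; lra.
  by rewrite cv'; lra.
exists c; first by rewrite cu cv'.
exists (Num.min (c - u) (v - c)); first by rewrite lt_min !subr_gt0 cu cv'.
move=> t; rewrite lt_min !ltr_norml => /andP [/andP [? ?] /andP [? ?]].
by apply: cmax; rewrite in_itv /=; apply/andP; split; lra.
Qed.

(* The mean value theorem for [expR (- a t) * g t], whose derivative is
   [expR (- a t) * (dg t - a * g t)]. *)
Lemma exp_weighted_mvt g dg (a u v : R) : (forall t, is_derive t 1 g (dg t)) ->
  u < v -> g u * g v < 0 -> exists2 w, u < w < v & 0 < (dg w - a * g w) * g v.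
Proof.
move=> gd uv guv; pose E t := expR (- a * t).
have dE t : is_derive t 1 E (expR (- a * t) * - a).
  apply: (@is_derive1_comp _ expR ( *%R (- a))).
  by have := is_deriveZ (- a) (is_derive_id t 1); rewrite [_%:A]mulr1.
have dEg t : is_derive t 1 (E * g) (E t * dg t + g t * (expR (- a * t) * - a)).
  exact: is_deriveM.
have cont : {within `[u, v], continuous (E * g)}.
  by apply: derivable_within_continuous => t _; have [] := dEg t.
have [w] := MVT uv (fun t _ => dEg t) cont.
rewrite in_itv /= => /andP [uw wv] mvt; exists w; first by rewrite uw wv.
have [Eu Ev Ew] : [/\ 0 < E u, 0 < E v & 0 < E w] by split; apply: expR_gt0.
have gv2 : 0 < g v ^+ 2.
  by rewrite exprn_even_gt0 //=; apply/eqP => gv0; move: guv; rewrite gv0 mulr0 ltxx.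
have : 0 < (E v * g v - E u * g u) * g v by nra.
have -> : E v * g v - E u * g u = (E * g) v - (E * g) u by [].
rewrite mvt -/(E w).
have -> : (E w * dg w + g w * (E w * - a)) * (v - u) * g v =
  (E w * (v - u)) * ((dg w - a * g w) * g v) by ring.
by rewrite pmulr_rgt0 // mulr_gt0 // subr_gt0.
Qed.

Lemma same_sign_trans (x y z : R) : 0 < x * y -> 0 < y * z -> 0 < x * z.
Proof.
move=> xy yz; have := mulr_gt0 xy yz.
have -> : x * y * (y * z) = x * z * y ^+ 2 by ring.
have y0 : y != 0 by apply/eqP => y0; move: xy; rewrite y0 mulr0 ltxx.
by rewrite pmulr_lgt0 // exprn_even_gt0.
Qed.

(* [g] changes sign at least [2 m] times around the circle. *)
Definition alternating_on_circle g (m : nat) : Prop :=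
  exists (p : nat -> R) (k : nat), p (2 * m)%N = p 0%N + 2 * pi /\
    forall i, (i < 2 * m)%N -> p i < p i.+1 /\ 0 < (-1) ^+ (i + k) * g (p i).

Lemma alternating_on_circle_gt0 g m : alternating_on_circle g m -> (0 < m)%N.
Proof.
case: m => // [[p [k [p0 _]]]]; have := pi_gt0 R.
by rewrite muln0 in p0; lra.
Qed.

Lemma alternating_on_circle_sign g m (p : nat -> R) (k : nat) : periodic2pi g ->
  p (2 * m)%N = p 0%N + 2 * pi ->
  (forall i, (i < 2 * m)%N -> p i < p i.+1 /\ 0 < (-1) ^+ (i + k) * g (p i)) ->
  forall i, (i <= 2 * m)%N -> 0 < (-1) ^+ (i + k) * g (p i).
Proof.
move=> gp p2m H i; rewrite leq_eqVlt => /orP [/eqP ->|/H [] //].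
have m0 : (0 < m)%N by apply: (@alternating_on_circle_gt0 g); exists p, k.
rewrite p2m gp -signr_odd oddD oddM /= signr_odd.
by case: (H 0%N) => //; rewrite muln_gt0.
Qed.

Lemma eq_alternating_on_circle g g' m : g =1 g' ->
  alternating_on_circle g m -> alternating_on_circle g' m.
Proof. by move=> /funext <-. Qed.

Lemma alternating_on_circleZ g (c : R) m : c != 0 ->
  alternating_on_circle g m -> alternating_on_circle (fun t => c * g t) m.
Proof.
move=> c0 [p [k [p2m H]]]; case: (ltrgtP c 0) c0 => // cs _.
- exists p, k.+1; split => // i /H [pi gi]; split => //.
  have -> : (-1) ^+ (i + k.+1) * (c * g (p i)) = - c * ((-1) ^+ (i + k) * g (p i)).
    by rewrite addnS exprS; ring.
  by rewrite mulr_gt0 // oppr_gt0.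
- exists p, k; split => // i /H [pi gi]; split => //.
  by rewrite mulrCA; apply: mulr_gt0.
Qed.

Lemma alternating_on_circle_derive g dg (a : R) m : periodic2pi g ->
  (forall t, is_derive t 1 g (dg t)) -> alternating_on_circle g m ->
  alternating_on_circle (fun t => dg t - a * g t) m.
Proof.
move=> gp gd alt; have m0 := alternating_on_circle_gt0 alt.
move: alt => [p [k [p2m H]]].
have S := alternating_on_circle_sign gp p2m H.
pose sgn i : R := (-1) ^+ (i + k).
have sgnS i : sgn i.+1 = - sgn i by rewrite /sgn addSn exprS mulN1r.
have : forall i, exists w, (i < 2 * m)%N ->
    p i < w < p i.+1 /\ 0 < sgn i.+1 * (dg w - a * g w).
  move=> i; case: (ltnP i (2 * m)) => hi; last by exists 0.
  have [lt si] := H i hi; have si1 := S i.+1 hi.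
  have neg : g (p i) * g (p i.+1) < 0.
    rewrite -oppr_gt0 -mulrN; apply: (@same_sign_trans _ (sgn i)).
      by rewrite mulrC.
    by rewrite mulrN -mulNr -sgnS.
  have [w wI wpos] := exp_weighted_mvt a gd lt neg.
  exists w => _; split => //; rewrite mulrC.
  by apply: same_sign_trans wpos _; rewrite mulrC.
case/choice => w Hw.
have n2 : (0 < 2 * m)%N by rewrite muln_gt0.
exists (fun i => if i == (2 * m)%N then w 0%N + 2 * pi else w i), k.+1.
split; first by rewrite eqxx eq_sym (negbTE (lt0n_neq0 n2)).
move=> i hi; rewrite (ltn_eqF hi).
have [/andP [l1 l2] s1] := Hw i hi.
split; last by rewrite addnS -addSn.
have [/andP [w0 _] _] := Hw 0%N n2.
case: eqP => [e|/eqP ne]; first by move: l2; rewrite e p2m; lra.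
have hi1 : (i.+1 < 2 * m)%N by rewrite ltn_neqAle ne hi.
have [/andP [l3 _] _] := Hw i.+1 hi1.
lra.
Qed.

Lemma is_derive_lincomb g1 g2 (a b t d1 d2 : R) :
  is_derive t 1 g1 d1 -> is_derive t 1 g2 d2 ->
  is_derive t 1 (fun s => a * g1 s + b * g2 s) (a * d1 + b * d2).
Proof. by move=> g1d g2d; have := is_deriveD (is_deriveZ a g1d) (is_deriveZ b g2d). Qed.

Lemma alternating_on_circle_second_order g g1 g2 (x y z : R) m :
  periodic2pi g -> periodic2pi g1 ->
  (forall t, is_derive t 1 g (g1 t)) -> (forall t, is_derive t 1 g1 (g2 t)) ->
  0 < y ^+ 2 - 4 * x * z -> alternating_on_circle g m ->
  alternating_on_circle (fun t => x * g t + y * g1 t + z * g2 t) m.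
Proof.
move=> gp g1p gd g1d disc alt.
have [z0 | z0] := eqVneq z 0.
  have y0 : y != 0 by apply/eqP => y0; move: disc; rewrite y0 z0 mulr0; lra.
  have := alternating_on_circleZ y0 (alternating_on_circle_derive (- x / y) gp gd alt).
  by apply: eq_alternating_on_circle => t /=; rewrite z0; field.
(* [a] and [b] are the roots of [z X^2 + y X + x]; then
   [x g + y g1 + z g2 = z (D - a) (D - b) g]. *)
pose sq := Num.sqrt (y ^+ 2 - 4 * x * z).
have sq2 : sq ^+ 2 = y ^+ 2 - 4 * x * z by rewrite sqr_sqrtr // ltW.
pose a := (- y + sq) / (2 * z); pose b := (- y - sq) / (2 * z).
have z2 : 2 * z != 0 by rewrite mulf_neq0 // pnatr_eq0.
have sum_ab : a + b = - y / z by rewrite /a /b; field.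
have prod_ab : a * b = x / z.
  have -> : a * b = (y ^+ 2 - sq ^+ 2) / (4 * z ^+ 2) by rewrite /a /b; field.
  by rewrite sq2; field.
pose k t := 1 * g1 t + - b * g t.
have kd t : is_derive t 1 k (1 * g2 t + - b * g1 t) by exact: is_derive_lincomb.
have kp : periodic2pi k by move=> t; rewrite /k gp g1p.
have altk : alternating_on_circle k m.
  apply: eq_alternating_on_circle (alternating_on_circle_derive b gp gd alt).
  by move=> t; rewrite /k; ring.
have := alternating_on_circleZ z0 (alternating_on_circle_derive a kp kd altk).
apply: eq_alternating_on_circle => t /=; rewrite /k.
have -> : z * (1 * g2 t + - b * g1 t - a * (1 * g1 t + - b * g t)) =
  z * g2 t - z * (a + b) * g1 t + z * (a * b) * g t by ring.
by rewrite sum_ab prod_ab; field.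
Qed.

Lemma pi2_gt0 : 0 < 2 * pi :> R.
Proof. by rewrite mulr_gt0 // pi_gt0. Qed.

Definition mod2pi (t : R) : R := t - (Num.floor (t / (2 * pi)))%:~R * (2 * pi).

Lemma mod2pi_itv t : 0 <= mod2pi t < 2 * pi.
Proof.
rewrite /mod2pi; have := pi2_gt0; set P := 2 * pi => P0.
have := floor_itv (t / P); rewrite intrD ler_pdivlMr // ltr_pdivrMr // mulrDl mul1r.
by move=> /andP [? ?]; apply/andP; split; lra.
Qed.

Lemma mod2pi_inj s t : s <= t < s + 2 * pi -> mod2pi s = mod2pi t -> s = t.
Proof.
move=> /andP [st ts]; rewrite /mod2pi => e.
set z := (Num.floor (t / (2 * pi)) - Num.floor (s / (2 * pi)))%Z.
have tsz : t - s = z%:~R * (2 * pi) by rewrite /z intrB mulrBl; lra.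
have z0 : 0 <= z%:~R :> R by rewrite -(pmulr_lge0 _ pi2_gt0) -tsz; lra.
have z1 : z%:~R < 1 :> R by rewrite -(ltr_pM2r pi2_gt0) mul1r -tsz; lra.
have z_ge0 : (0 <= z)%R by rewrite -(ler0z R).
have z_lt1 : (z < 1)%R by rewrite -(ltr_int R).
have z_eq0 : z = 0 by lia.
by move: tsz; rewrite z_eq0 mul0r; lra.
Qed.

Lemma periodic2pi_intmul h (z : int) t : periodic2pi h -> h (t + z%:~R * (2 * pi)) = h t.
Proof.
move=> /periodicn hn; case: z => n; first by rewrite pmulrn mulr_natl hn.
rewrite NegzE mulrNz pmulrn mulNr mulr_natl.
by rewrite -[in RHS](subrK ((2 * pi) *+ n.+1) t) hn.
Qed.

Lemma is_local_max_mod2pi h t : periodic2pi h -> is_local_max h t -> is_local_max h (mod2pi t).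
Proof.
move=> hp [e e0 He]; exists e => // s; rewrite /mod2pi => se.
set k := Num.floor _.
have -> : s = s + k%:~R * (2 * pi) + (- k)%:~R * (2 * pi) by rewrite intrN mulNr addrK.
have -> : t - k%:~R * (2 * pi) = t + (- k)%:~R * (2 * pi) by rewrite intrN mulNr.
rewrite !(@periodic2pi_intmul h (- k)) //; apply: He.
by move: se; rewrite opprB addrA addrAC.
Qed.

Lemma sub_at_least_on_circle (P Q : R -> Prop) m : (forall t, P t -> Q t) ->
  at_least_on_circle m P -> at_least_on_circle m Q.
Proof.
move=> PQ [s [sz us Ps]]; exists s; split => // t /Ps [? ? ?].
by split => //; apply: PQ.
Qed.

Lemma at_least_on_circle_window (P : R -> Prop) m (a : R) (c : nat -> R) :
  (forall t, P t -> P (mod2pi t)) ->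
  (forall i j, (i < j < m)%N -> c i < c j) ->
  (forall j, (j < m)%N -> [/\ a <= c j, c j < a + 2 * pi & P (c j)]) ->
  at_least_on_circle m P.
Proof.
move=> Pmod cinc cwin; exists [seq mod2pi (c j) | j <- iota 0 m]; split.
- by rewrite size_map size_iota.
- have cinj i j : (i < j < m)%N -> mod2pi (c i) != mod2pi (c j).
    move=> /andP [ij jm]; have im := ltn_trans ij jm.
    have cij := cinc i j; rewrite ij jm in cij.
    have [ai _ _] := cwin i im; have [_ ja _] := cwin j jm.
    apply/eqP => /mod2pi_inj cij'.
    by have := cij isT; rewrite cij' ?ltxx //; apply/andP; split; lra.
  rewrite map_inj_in_uniq ?iota_uniq // => i j.
  rewrite !mem_iota !add0n => /andP [_ im] /andP [_ jm] eij.
  case: (ltngtP i j) => // [ij|ji].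
  + by have := cinj i j; rewrite ij jm /= eij eqxx => /(_ isT).
  + by have := cinj j i; rewrite ji im /= eij eqxx => /(_ isT).
- move=> t /mapP [j]; rewrite mem_iota add0n => /andP [_ jm] ->.
  have [_ _ Pc] := cwin j jm; have /andP [? ?] := mod2pi_itv (c j).
  by split => //; apply: Pmod.
Qed.

Lemma at_least_on_circle_sorted (P : R -> Prop) m : at_least_on_circle m P ->
  exists c : nat -> R, (forall i j, (i < j < m)%N -> c i < c j) /\
    forall j, (j < m)%N -> [/\ 0 <= c j, c j < 2 * pi & P (c j)].
Proof.
move=> [s [sz un Hs]]; pose s' := sort <=%R s; exists (nth 0 s'); split.
- have ss : sorted <%R s'.
    by rewrite lt_sorted_uniq_le sort_uniq un sort_sorted //; exact: le_total.
  move=> i j /andP [ij jm].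
  by rewrite (lt_sorted_ltn_nth 0 ss) // inE size_sort sz // (ltn_trans ij jm).
- move=> j jm; apply: Hs; rewrite -(mem_sort <=%R); apply: mem_nth.
  by rewrite size_sort sz.
Qed.

Lemma alternating_on_circle_local_max h dh m : periodic2pi h -> periodic2pi dh ->
  (forall t, is_derive t 1 h (dh t)) -> alternating_on_circle dh m ->
  at_least_on_circle m (is_local_max h).
Proof.
move=> hp dhp hd [p [k [p2m H]]].
have S := alternating_on_circle_sign dhp p2m H.
have pinc : {in [pred i | i <= 2 * m]%N &, {homo p : i j / (i < j)%N >-> i < j}}.
  apply: homo_ltn_in => [y x z|i j _ jm l /andP [_ lj]|i]; first exact: lt_trans.
    by rewrite !inE in jm *; lia.
  by rewrite !inE => _ /H [].
have pmono i j : (i <= j <= 2 * m)%N -> p i <= p j.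
  move=> /andP [ij jm]; case: (ltngtP i j) ij => // [ij _|-> _]; last exact: lexx.
  by apply/ltW/pinc; rewrite // inE (leq_trans (ltnW ij)).
pose i0 j := (2 * j + odd k)%N.
have : forall j, exists c, (j < m)%N -> p (i0 j) < c < p (i0 j).+1 /\ is_local_max h c.
  move=> j; case: (ltnP j m) => jm; last by exists 0.
  have ij : (i0 j < 2 * m)%N by rewrite /i0; lia.
  have sgn_even : (-1) ^+ (i0 j + k) = 1 :> R.
    by rewrite -signr_odd /i0 !oddD; case: (odd j); case: (odd k).
  have := S _ (ltnW ij); rewrite sgn_even mul1r => pos.
  have := S _ ij; rewrite addSn exprS sgn_even mulr1 mulN1r oppr_gt0 => neg.
  by have [c cI cmax] := is_local_max_between hd (H _ ij).1 pos neg; exists c.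
case/choice => c Hc.
apply: (@at_least_on_circle_window _ m (p 0%N) c).
- by move=> t; exact: is_local_max_mod2pi.
- move=> i j /andP [ij jm]; have im : (i < m)%N by lia.
  have [/andP [_ ci] _] := Hc i im; have [/andP [cj _] _] := Hc j jm.
  have : p (i0 i).+1 <= p (i0 j) by apply: pmono; rewrite /i0; lia.
  lra.
- move=> j jm; have [/andP [pc cp] cmax] := Hc j jm; split => //.
  + by apply: le_trans (ltW pc); apply: pmono; rewrite /i0; lia.
  + by rewrite -p2m; apply: lt_le_trans cp _; apply: pmono; rewrite /i0; lia.
Qed.

Lemma pos_lower_bound (G : nat -> R) m : (forall i, (i < m)%N -> 0 < G i) ->
  exists2 d, 0 < d & forall i, (i < m)%N -> d < G i.
Proof.
elim: m => [|m IH] Gpos; first by exists 1.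
have [d d0 Hd] := IH (fun i im => Gpos i (ltnW im)).
have Gm := Gpos m (ltnSn m).
exists (Num.min d (G m / 2)); first by rewrite lt_min d0 divr_gt0.
move=> i; rewrite ltnS leq_eqVlt => /orP [/eqP ->|im]; rewrite gt_min.
  by apply/orP; right; lra.
by rewrite Hd.
Qed.

Lemma alternating_on_circle_of_simple_zeros g dg m : (0 < m)%N ->
  (forall t, is_derive t 1 g (dg t)) -> (forall t, g t = 0 -> dg t != 0) ->
  at_least_on_circle (2 * m) (fun t => g t = 0) -> alternating_on_circle g m.
Proof.
move=> m0 gd simple /at_least_on_circle_sorted [c [cinc cwin]].
have m2 : (0 < 2 * m)%N by rewrite muln_gt0.
pose T i := if i == (2 * m)%N then c 0%N + 2 * pi else c i.
have gap i : (i < 2 * m)%N -> 0 < T i.+1 - T i.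
  move=> im; rewrite /T (ltn_eqF im) subr_gt0; case: eqP => [_|/eqP ne].
    by have [c0 _ _] := cwin 0%N m2; have [_ ci _] := cwin i im; lra.
  by apply: cinc; rewrite ltnSn ltn_neqAle ne.
have [d d0 Hd] := pos_lower_bound gap.
(* Points within [d / 2] of consecutive zeros stay in the same order. *)
have : forall i, exists u, (i < 2 * m)%N -> `|u - T i| < d / 2 /\ 0 < (-1) ^+ i * g u.
  move=> i; case: (ltnP i (2 * m)) => im; last by exists 0.
  have [_ _ gi] := cwin i im.
  have [u ?] := simple_zero_sign_near i (gd (c i)) (simple _ gi) gi (divr_gt0 d0 (ltr0Sn _ 1)).
  by exists u; rewrite /T (ltn_eqF im).
case/choice => u Hu.
exists (fun i => if i == (2 * m)%N then u 0%N + 2 * pi else u i), 0%N.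
split; first by rewrite eqxx eq_sym (negbTE (lt0n_neq0 m2)).
move=> i im; rewrite (ltn_eqF im) addn0.
have [ui ?] := Hu i im; split => //.
have Ti : T i = c i by rewrite /T (ltn_eqF im).
have gi := Hd i im; rewrite Ti in gi; move: ui; rewrite Ti ltr_norml => /andP [? ?].
case: eqP => [e|/eqP ne].
  have [u0 _] := Hu 0%N m2; move: u0 gi; rewrite ltr_norml /T e eqxx (ltn_eqF m2).
  by move=> /andP [? ?] ?; lra.
have im1 : (i.+1 < 2 * m)%N by rewrite ltn_neqAle ne.
have [ui1 _] := Hu i.+1 im1; move: ui1 gi; rewrite ltr_norml /T (ltn_eqF im1).
by move=> /andP [? ?] ?; lra.
Qed.

Lemma periodic_derive1 g (T : R) : periodic g T -> periodic (derive1 g) T.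
Proof.
move=> gT t; rewrite /derive1 gT.
suff -> : (fun e => e^-1 *: (g (e + (t + T)) - g t)) =
  (fun e => e^-1 *: (g (e + t) - g t)) by [].
by apply/funext => e; rewrite addrA gT.
Qed.

Lemma periodic_derive1n g (T : R) k : periodic g T -> periodic (derive1n k g) T.
Proof. by move=> gT; elim: k => [|k IH] //=; apply: periodic_derive1. Qed.

Lemma smooth_is_derive f k t : smooth f ->
  is_derive t 1 (derive1n k f) (derive1n k.+1 f t).
Proof. by move=> /(_ k t) /derivableP; rewrite /= derive1E. Qed.

Lemma is_derive_hv f (x y z t : R) : smooth f ->
  is_derive t 1 (hv f x y z) (x * derive1n 1 f t + y * derive1n 2 f t + z * derive1n 3 f t).
Proof.
move=> fs; have fd k := smooth_is_derive k t fs.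
have := is_derive_lincomb 1 z (is_derive_lincomb x y (fd 0%N) (fd 1%N)) (fd 2%N).
by rewrite mul1r; congr is_derive; apply/funext => s; rewrite /hv mul1r.
Qed.

End SignChangesOnCircle.

Theorem lemma4p1 (R : realType) (n : nat) (hn : (1 <= n)%N) (f : R -> R)
  (fsmooth : smooth f) (fper : periodic2pi f)
  (fext : at_least_on_circle (2 * n)%N (is_local_extremum f))
  (fnd : nondegenerate_crit f) :
  S2_negligible
    [set v : R * R * R | S2 v /\ 0 < v.1.2 ^+ 2 - 4 * v.1.1 * v.2 /\
       ~ at_least_on_circle n (is_local_max (hv f v.1.1 v.1.2 v.2))].
Proof.
have fd k t := smooth_is_derive k t fsmooth.
have fp k : periodic2pi (derive1n k f) := periodic_derive1n k fper.
have f'_alt : alternating_on_circle (derive1n 1 f) n.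
  apply: alternating_on_circle_of_simple_zeros hn (fd 1%N) fnd _.
  apply: sub_at_least_on_circle fext => t.
  by move=> /(is_local_extremum_is_derive0 (fsmooth 0%N)) [_ <-]; rewrite /= derive1E.
have hv_max x y z : 0 < y ^+ 2 - 4 * x * z ->
    at_least_on_circle n (is_local_max (hv f x y z)).
  move=> disc.
  apply: (alternating_on_circle_local_max _ _ (fun t => is_derive_hv x y z t fsmooth)).
  - by move=> t; rewrite /hv fper (fp 1%N) (fp 2%N).
  - by move=> t; rewrite (fp 1%N) (fp 2%N) (fp 3%N).
  - exact: alternating_on_circle_second_order (fp 1%N) (fp 2%N) (fd 1%N) (fd 2%N) disc f'_alt.
suff -> : [set v : R * R * R | S2 v /\ 0 < v.1.2 ^+ 2 - 4 * v.1.1 * v.2 /\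
    ~ at_least_on_circle n (is_local_max (hv f v.1.1 v.1.2 v.2))] = set0.
  by rewrite /S2_negligible preimage_set0; exact: negligible_set0.
by apply/seteqP; split => // v [_ [disc]]; apply; apply: hv_max.
Qed.
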